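(* The short exact sequence $1\to\mathrm{Sym}(\{0,1\}^* )\to QF\xrightarrow{\pi} F\to 1$ splits.
   Context: Let $\{0,1\}^*$ be the finite words over $\{0,1\}$, the vertices of the rooted binary tree in which $x$ has children $x0$ and $x1$ (two edge colours). $QV$ is the group of bijections $\tau$ of $\{0,1\}^*$ with $\tau(x0)=\tau(x)0$ and $\tau(x1)=\tau(x)1$ for all but finitely many $x$. Each such $\tau$ induces a homeomorphism $\pi(\tau)$ of $\{0,1\}^{\mathbb N}$ by $\pi(\tau)(\ell\omega)=\tau(\ell)\omega$, for $\ell$ in a finite maximal prefix-antichain $L$ with $\tau(\ell s)=\tau(\ell)s$ for all $\ell\in L$ and words $s$; this gives a surjective homomorphism $\pi$ onto Thompson's group $V$ whose kernel is $\mathrm{Sym}(\{0,1\}^* )$, the finitely supported permutations. Thompson's group $F\le V$ consists of the lexicographic-order-preserving elements, $QF=\pi^{-1}(F)$, and $\pi$ also denotes the restriction $QF\to F$. *)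

From mathcomp Require Import all_boot.
Set Implicit Arguments. Unset Strict Implicit. Unset Printing Implicit Defensive.

(* Vertices of the rooted binary tree: finite words over {0,1} = {false,true};
   the children of x are x0 = rcons x false and x1 = rcons x true. *)
Definition word := seq bool.
Definition cantor := nat -> bool.

Definition wcat (l : word) (w : cantor) : cantor :=
  fun n => if n < size l then nth false l n else w (n - size l).

Definition QV (tau : word -> word) : Prop :=
  bijective tau /\
  exists S : seq word, forall x : word, x \notin S ->
    forall b : bool, tau (rcons x b) = rcons (tau x) b.

Definition comparable_w (u v : word) : bool := prefix u v || prefix v u.

Definition max_antichain (L : seq word) : Prop :=
  uniq L /\
  (forall u v, u \in L -> v \in L -> u != v -> ~~ comparable_w u v) /\
  (forall w : word, exists2 l, l \in L & comparable_w l w).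

(* g = pi(tau): there is a finite maximal prefix-antichain L with
   tau(l s) = tau(l) s for all l in L and words s, and g(l omega) = tau(l) omega. *)
Definition induces (tau : word -> word) (g : cantor -> cantor) : Prop :=
  exists L : seq word, max_antichain L /\
    (forall l s, l \in L -> tau (l ++ s) = tau l ++ s) /\
    (forall l (w : cantor), l \in L -> g (wcat l w) = wcat (tau l) w).

Definition ThompsonV (g : cantor -> cantor) : Prop :=
  exists tau, QV tau /\ induces tau g.

Definition lex_lt (w w' : cantor) : Prop :=
  exists n, (forall i, i < n -> w i = w' i) /\ w n = false /\ w' n = true.

Definition ThompsonF (g : cantor -> cantor) : Prop :=
  ThompsonV g /\ forall w w', lex_lt w w' -> lex_lt (g w) (g w').

Definition QF (tau : word -> word) : Prop :=
  QV tau /\ exists g, induces tau g /\ ThompsonF g.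

From mathcomp Require Import all_boot.
From Stdlib Require Import Classical ClassicalEpsilon FunctionalExtensionality.
Set Implicit Arguments. Unset Strict Implicit.

(* The section sends g in F to the permutation of {0,1}^* that it induces on
   the points x01^oo: an order-preserving g maps such a point to another one,
   because g replaces a long prefix of x01^oo, keeping the tail of 1s, and the
   image cannot be 1^oo, the maximum of the lexicographic order. Uniqueness of
   y with g(x01^oo) = y01^oo makes this a homomorphism. Off the finitely many
   proper prefixes of an antichain L for g, the resulting map agrees with any
   tau in QF lying over g, so it is in QF, lies over g, and is a bijection
   since it is injective and differs from the bijection tau on a finite set. *)

Lemma wcat_cat l m w : wcat l (wcat m w) = wcat (l ++ m) w.
Proof.
apply: functional_extensionality => n; rewrite /wcat size_cat nth_cat.
case: (ltnP n (size l)) => Hn; first by rewrite (leq_trans Hn (leq_addr _ _)).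
by rewrite ltn_subLR // subnDA.
Qed.

Lemma wcat_nil w : wcat [::] w = w.
Proof. by apply: functional_extensionality => n; rewrite /wcat subn0. Qed.

Definition ones : cantor := fun _ => true.

Definition lpt (x : word) : cantor := wcat (rcons x false) ones.

Lemma lpt_inj : injective lpt.
Proof.
have size_le a b : lpt a = lpt b -> size b <= size a.
  move=> Eab; rewrite leqNgt; apply/negP => Hlt.
  have := congr1 (fun f => f (size b)) Eab; rewrite /lpt /wcat !size_rcons.
  by rewrite ltnSn ltnS leqNgt Hlt /= nth_rcons ltnn eqxx.
move=> x y Exy.
have Hs : size x = size y by apply/eqP; rewrite eqn_leq !size_le.
apply: (@eq_from_nth _ false) => // i Hi.
have := congr1 (fun f => f i) Exy; rewrite /lpt /wcat !size_rcons -Hs ltnS ltnW //.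
by rewrite !nth_rcons -Hs Hi.
Qed.

Lemma lpt_cat l s : lpt (l ++ s) = wcat l (lpt s).
Proof. by rewrite /lpt wcat_cat rcons_cat. Qed.

Lemma lex_lt_irr w : ~ lex_lt w w.
Proof. by case=> n [_ [->]]. Qed.

Lemma lex_lt_ones w : ~ lex_lt ones w.
Proof. by case=> n [_ []]. Qed.

Lemma lex_lt_total w w' : w <> w' -> lex_lt w w' \/ lex_lt w' w.
Proof.
move=> Nww'.
have ex_neq : exists n, w n != w' n.
  apply: NNPP => Hno; apply: Nww'; apply: functional_extensionality => n.
  by apply/eqP; apply: negbNE; apply/negP => Hn; apply: Hno; exists n.
case: (ex_minnP ex_neq) => n Hn Hmin.
have Heq i : i < n -> w i = w' i.
  move=> Hi; apply/eqP; apply: negbNE; apply/negP => /Hmin.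
  by rewrite leqNgt Hi.
move: Hn; case Ew: (w n); case Ew': (w' n) => // _.
  by right; exists n; split=> // i /Heq.
by left; exists n.
Qed.

Lemma lex_mono_inj g :
  (forall w w', lex_lt w w' -> lex_lt (g w) (g w')) -> injective g.
Proof.
move=> Hg w w' E; apply: NNPP => Nww'.
by case: (lex_lt_total Nww') => /Hg; rewrite E; apply: lex_lt_irr.
Qed.

Lemma lpt_lt x : lex_lt (lpt x) (wcat (rcons x true) ones).
Proof.
exists (size x); rewrite /lpt /wcat !size_rcons ltnSn !nth_rcons ltnn eqxx.
by split=> // i Hi; rewrite ltnS ltnW // !nth_rcons Hi.
Qed.

Lemma wcat_ones z : wcat z ones = ones \/ exists y, wcat z ones = lpt y.
Proof.
elim/last_ind: z => [|z [] IH]; first by left; rewrite wcat_nil.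
  rewrite -cats1 -wcat_cat.
  have -> : wcat [:: true] ones = ones.
    by apply: functional_extensionality => -[].
  exact: IH.
by right; exists z.
Qed.

Definition prefix_cover (L : seq word) : Prop :=
  forall w : word, exists2 l, l \in L & comparable_w l w.

Definition strict_prefixes (L : seq word) : seq word :=
  flatten [seq [seq take i l | i <- iota 0 (size l)] | l <- L].

Lemma strict_prefixes_size L x : x \in strict_prefixes L -> size x < sumn (map size L).
Proof.
case/flattenP=> _ /mapP[l Hl ->] /mapP[i]; rewrite mem_iota add0n => /andP[_ Hi] ->.
rewrite size_take Hi; apply: leq_trans Hi _.
elim: L Hl => //= l' L IH; rewrite in_cons => /orP[/eqP <- | /IH].
  exact: leq_addr.
by move/leq_trans; apply; apply: leq_addl.
Qed.

Lemma prefix_cover_split L : prefix_cover L ->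
  forall x, (exists l s, l \in L /\ x = l ++ s) \/ x \in strict_prefixes L.
Proof.
move=> Hcov x; have [l Hl] := Hcov x.
case/orP=> [/prefixP[s ->] | Hxl]; first by left; exists l, s.
case: (ltnP (size x) (size l)) => Hs.
  right; apply/flattenP; exists [seq take i l | i <- iota 0 (size l)].
    by apply/mapP; exists l.
  by apply/mapP; exists (size x); [rewrite mem_iota | move: Hxl; rewrite prefixE => /eqP].
left; exists l, [::]; split => //; rewrite cats0.
have Es : size x = size l by apply/eqP; rewrite eqn_leq size_prefix.
by move: Hxl; rewrite prefixE Es take_size => /eqP.
Qed.

Lemma induces_long_prefix tau g : induces tau g ->
  exists m, forall (w : word) (v : cantor), m <= size w ->
    exists u, g (wcat w v) = wcat u v.
Proof.
case=> L [[_ [_ Hcov]] [_ Hg]]; exists (sumn (map size L)) => w v Hw.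
case: (prefix_cover_split Hcov w) => [[l [s [Hl ->]]] | /strict_prefixes_size].
  by exists (tau l ++ s); rewrite -!wcat_cat Hg.
by rewrite ltnNge Hw.
Qed.

Lemma ThompsonF_lpt g x : ThompsonF g -> exists y, g (lpt x) = lpt y.
Proof.
case=> [[tau [_ /induces_long_prefix [m Hm]]] Hlex].
have [|u Hu] := Hm (rcons x false ++ nseq m true) ones.
  by rewrite size_cat size_nseq leq_addl.
have Hx : lpt x = wcat (rcons x false ++ nseq m true) ones.
  rewrite -wcat_cat; congr wcat; apply: functional_extensionality => n.
  by rewrite /wcat size_nseq nth_nseq /ones; case: (n < m).
rewrite Hx Hu; case: (wcat_ones u) => // Hones.
by have := Hlex _ _ (lpt_lt x); rewrite Hx Hu Hones => /lex_lt_ones.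
Qed.

Definition sec (g : cantor -> cantor) (x : word) : word :=
  epsilon (inhabits x) (fun y => g (lpt x) = lpt y).

Lemma sec_eq g x y : g (lpt x) = lpt y -> sec g x = y.
Proof.
move=> Hy; apply: lpt_inj; rewrite -Hy; symmetry.
exact: (epsilon_spec _ (fun y => g (lpt x) = lpt y) (ex_intro _ y Hy)).
Qed.

Lemma sec_spec g x : ThompsonF g -> g (lpt x) = lpt (sec g x).
Proof. by move=> /(ThompsonF_lpt x) [y Hy]; rewrite (sec_eq Hy). Qed.

Lemma sec_comp g h x : ThompsonF g -> ThompsonF h -> sec (g \o h) x = sec g (sec h x).
Proof. by move=> Hg Hh; apply: sec_eq; rewrite /= !sec_spec. Qed.

Lemma sec_inj g : ThompsonF g -> injective (sec g).
Proof.
move=> Hg x y Exy; apply: lpt_inj; apply: (lex_mono_inj Hg.2).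
by rewrite !sec_spec // Exy.
Qed.

Lemma sec_cat g tau (L : seq word) : ThompsonF g ->
  (forall l w, l \in L -> g (wcat l w) = wcat (tau l) w) ->
  forall l s, l \in L -> sec g (l ++ s) = tau l ++ s.
Proof. by move=> Hg HL l s Hl; apply: sec_eq; rewrite !lpt_cat HL. Qed.

Lemma bij_eq_off_finite (T : choiceType) (f t : T -> T) (B : seq T) :
  injective f -> bijective t -> (forall x, x \notin B -> f x = t x) -> bijective f.
Proof.
move=> f_inj [tinv tK tinvK] Hft.
have f_surj y : exists x, f x == y.
  have [Hy | Hy] := boolP (tinv y \in B); last by exists (tinv y); rewrite Hft // tinvK.
  pose U := undup B.
  have fU_tU : {subset map f U <= map t U}.
    move=> _ /mapP[b Hb ->]; apply/mapP.
    have [Hz | Hz] := boolP (tinv (f b) \in B).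
      by exists (tinv (f b)); rewrite ?mem_undup ?tinvK.
    have /f_inj Eb : f (tinv (f b)) = f b by rewrite Hft // tinvK.
    by move: Hz; rewrite Eb -mem_undup Hb.
  have fU_uniq : uniq (map f U) by rewrite (map_inj_uniq f_inj) undup_uniq.
  have [|_ EfU] := uniq_min_size fU_uniq fU_tU; first by rewrite !size_map.
  have : tinv y \in U by rewrite mem_undup.
  by move/(map_f t); rewrite tinvK -EfU => /mapP[x _ ->]; exists x.
exists (fun y => xchoose (f_surj y)) => [x | y]; last exact/eqP/(xchooseP (f_surj y)).
by apply: f_inj; apply/eqP/(xchooseP (f_surj (f x))).
Qed.

Lemma sec_QV_induces g : ThompsonF g -> QV (sec g) /\ induces (sec g) g.
Proof.
move=> Hg; case: (Hg) => [[tau [[tau_bij _] [L [L_max [Htau HL]]]]] _].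
have sec_L := sec_cat Hg HL.
have sec_L0 l : l \in L -> sec g l = tau l.
  by move=> Hl; rewrite -[l in sec g l]cats0 sec_L // cats0.
have sec_off x : x \notin strict_prefixes L -> exists l s, l \in L /\ x = l ++ s.
  by case: (prefix_cover_split L_max.2.2 x) => // ->.
split; last first.
  exists L; do 2!split=> //.
    by move=> l s Hl; rewrite sec_L // sec_L0.
  by move=> l w Hl; rewrite HL // sec_L0.
split; last first.
  exists (strict_prefixes L) => x /sec_off [l [s [Hl ->]]] b.
  by rewrite rcons_cat !sec_L // rcons_cat.
apply: (bij_eq_off_finite (sec_inj Hg) tau_bij (B := strict_prefixes L)).
by move=> x /sec_off [l [s [Hl ->]]]; rewrite sec_L // Htau.
Qed.

Theorem lemma2p5 :
  exists s : (cantor -> cantor) -> (word -> word),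
    (forall g, ThompsonF g -> QF (s g) /\ induces (s g) g) /\
    (forall g h, ThompsonF g -> ThompsonF h ->
       forall x : word, s (g \o h) x = s g (s h x)).
Proof.
exists sec; split; last by move=> g h Hg Hh x; apply: sec_comp.
move=> g Hg; have [HQV Hind] := sec_QV_induces Hg.
by split=> //; split=> //; exists g.
Qed.
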